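(* Let $f$ be a discretely conic function on a discrete set $\mathrm{dom}(f)\subseteq\mathbb{R}^n$ such that for every $\alpha\in\mathbb{R}$ the set $\{x\in\mathrm{dom}(f): f(x)\le\alpha\}$ is finite. Then there exists a conic function $g$ with $\mathrm{dom}(g)=\mathrm{conv}(\mathrm{dom}(f))$ and $g(x)=f(x)$ for all $x\in\mathrm{dom}(f)$ if and only if for every $i\ge 2$ (for which $\mathrm{MIN}_i(f)$ is defined) $$\mathrm{MIN}_i(f)\subseteq \mathrm{relbd}(P_i),\qquad P_i=\mathrm{conv}(\mathrm{MIN}_1(f)\cup\dots\cup\mathrm{MIN}_i(f)).$$ Equivalently: for all $z\in\mathrm{dom}(f)\setminus\mathrm{MIN}_1(f)$, $\{x\in\mathrm{dom}(f): f(x)=f(z)\}\subseteq\mathrm{relbd}(\mathrm{conv}\{x\in\mathrm{dom}(f): f(x)\le f(z)\})$.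
   Context: A set $D\subseteq\mathbb{R}^n$ is discrete if every $x\in D$ has a ball around it meeting $D$ only in $x$. For points $x^{(1)},\dots,x^{(k)}$, $\mathrm{cone}(x^{(1)},\dots,x^{(k-1)}\mid x^{(k)}) := x^{(k)}+\{\sum_{i<k}\lambda_i (x^{(k)}-x^{(i)}) : \lambda_i\ge 0\}$. A function $f$ with discrete domain is discretely conic if for all $y,x^{(1)},\dots,x^{(k)}\in\mathrm{dom}(f)$ with $f(x^{(1)})\le\dots\le f(x^{(k)})$ and $y\in\mathrm{cone}(x^{(1)},\dots,x^{(k-1)}\mid x^{(k)})$ we have $f(y)\ge f(x^{(k)})$. A function $g$ on a convex set is conic if for all $y,z\in\mathrm{dom}(g)$, $t\ge0$ with $g(y)\le g(z)$ and $z+t(z-y)\in\mathrm{dom}(g)$, $g(z+t(z-y))\ge g(z)$. Under the finiteness hypothesis, the distinct values of $f$ form an increasing sequence $v_1<v_2<\cdots$, and $\mathrm{MIN}_i(f)=\{x: f(x)=v_i\}$. $\mathrm{relbd}(S)$ is the boundary of $S$ relative to its affine hull. *)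

From Stdlib Require Import Reals List Sorted.
From Stdlib Require Vectors.Fin.
Import ListNotations.
Open Scope R_scope.

Definition vec (n : nat) := Fin.t n -> R.

Definition vzero {n} : vec n := fun _ => 0.
Definition vadd {n} (x y : vec n) : vec n := fun i => x i + y i.
Definition vsub {n} (x y : vec n) : vec n := fun i => x i - y i.
Definition vscale {n} (t : R) (x : vec n) : vec n := fun i => t * x i.

Definition lincomb {n} (ps : list (vec n * R)) : vec n :=
  fold_right (fun pl acc => vadd (vscale (snd pl) (fst pl)) acc) vzero ps.
Definition wsum {n} (ps : list (vec n * R)) : R :=
  fold_right (fun pl s => snd pl + s) 0 ps.

(* open ball for the max-norm (induces the standard topology on R^n) *)
Definition ball {n} (x : vec n) (eps : R) (y : vec n) : Prop :=
  forall i, Rabs (y i - x i) < eps.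

Definition discrete {n} (D : vec n -> Prop) : Prop :=
  forall x, D x -> exists eps, 0 < eps /\ forall y, D y -> ball x eps y -> y = x.

Definition conv {n} (S : vec n -> Prop) (x : vec n) : Prop :=
  exists ps, Forall (fun pl => S (fst pl) /\ 0 <= snd pl) ps /\ wsum ps = 1 /\ x = lincomb ps.
Definition aff {n} (S : vec n -> Prop) (x : vec n) : Prop :=
  exists ps, Forall (fun pl => S (fst pl)) ps /\ wsum ps = 1 /\ x = lincomb ps.

Definition relbd {n} (S : vec n -> Prop) (x : vec n) : Prop :=
  aff S x /\
  forall eps, 0 < eps ->
    (exists y, S y /\ ball x eps y) /\ (exists y, aff S y /\ ~ S y /\ ball x eps y).

(* discretely conic: the list ps = [(x1,l1);...;(x_{k-1},l_{k-1})], xk = x^(k),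
   y = xk + sum_i l_i (xk - x_i) *)
Definition discretely_conic {n} (D : vec n -> Prop) (f : vec n -> R) : Prop :=
  forall (ps : list (vec n * R)) (xk y : vec n),
    D y -> D xk ->
    Forall (fun pl => D (fst pl) /\ 0 <= snd pl) ps ->
    Sorted (fun a b => f a <= f b) (map fst ps ++ [xk]) ->
    y = vadd xk (lincomb (map (fun pl => (vsub xk (fst pl), snd pl)) ps)) ->
    f xk <= f y.

Definition conic {n} (C : vec n -> Prop) (g : vec n -> R) : Prop :=
  forall (y z : vec n) (t : R),
    C y -> C z -> 0 <= t -> g y <= g z ->
    C (vadd z (vscale t (vsub z y))) ->
    g z <= g (vadd z (vscale t (vsub z y))).

Definition finite_sublevels {n} (D : vec n -> Prop) (f : vec n -> R) : Prop :=
  forall alpha : R, exists l : list (vec n), forall x, D x -> f x <= alpha -> In x l.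

(* MINU D f i = MIN_1(f) u ... u MIN_i(f)  (MINU 0 = empty):
   MIN_{i+1} is the set of minimizers of f on D minus MIN_1 u ... u MIN_i. *)
Fixpoint MINU {n} (D : vec n -> Prop) (f : vec n -> R) (i : nat) (x : vec n) : Prop :=
  match i with
  | O => False
  | S j => MINU D f j x \/
           (D x /\ ~ MINU D f j x /\ forall y, D y -> ~ MINU D f j y -> f x <= f y)
  end.

Definition MIN {n} (D : vec n -> Prop) (f : vec n -> R) (i : nat) (x : vec n) : Prop :=
  MINU D f i x /\ ~ MINU D f (pred i) x.

From Stdlib Require Import Reals List Sorted Lra Lia Permutation Classical
  FunctionalExtensionality PropExtensionality ClassicalEpsilon.
Import ListNotations.
Open Scope R_scope.

(* Both sides of the equivalence hold under the hypotheses.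

   Boundary condition: by discrete conicity, a point x of dom(f) is never a convex
   combination of points of level <= f(x) in which a point of strictly lower level has
   positive weight (that point would lie in the cone spanned from x by the others).
   For x in MIN_i(f), i >= 2, and a of lower level, the ray from a through x therefore
   leaves conv(MIN_1 u ... u MIN_i) immediately after x, so x is a relative boundary point.

   Extension: let P(v) = conv {f <= v}, a polytope by finiteness of sublevel sets. For
   consecutive values u < w of f, the point x lies at level (1 - s) u + s w if
   x is in (1 - s) P(u) + s P(w), and g(x) is the least such level. The infimum is attained
   because these mixtures of polytopes are again polytopes, hence closed; g agrees with f
   on dom(f) by the same combination argument. Finally, if g(y) <= g(z) but
   w = z + t (z - y) had g(w) < g(z), then z, a convex combination of w and y, would lie
   at a level below g(z), because the mixtures are jointly convex in (s, x). *)

(** * Convex combinations *)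

Lemma vec_ext {n} (x y : vec n) : (forall i, x i = y i) -> x = y.
Proof. apply functional_extensionality. Qed.

Lemma ratio_bounds a b : 0 <= a <= b -> 0 < b -> 0 <= a / b <= 1.
Proof. intros Hab Hb. assert (E : a / b * b = a) by (field; lra). split; nra. Qed.

Lemma lincomb_app {n} (ps qs : list (vec n * R)) i :
  lincomb (ps ++ qs) i = lincomb ps i + lincomb qs i.
Proof.
  induction ps as [|[p l] ps IH]; simpl; unfold vadd, vscale, vzero in *; simpl in *; [lra|].
  rewrite IH; lra.
Qed.

Lemma wsum_app {n} (ps qs : list (vec n * R)) : wsum (ps ++ qs) = wsum ps + wsum qs.
Proof. induction ps as [|[p l] ps IH]; simpl; [lra|]. rewrite IH; lra. Qed.

Lemma lincomb_perm {n} (ps qs : list (vec n * R)) i :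
  Permutation ps qs -> lincomb ps i = lincomb qs i.
Proof.
  induction 1 as [|[p l] ps qs _ IH|[p l] [q m] ps|]; simpl; unfold vadd, vscale in *; simpl in *; lra.
Qed.

Lemma wsum_perm {n} (ps qs : list (vec n * R)) : Permutation ps qs -> wsum ps = wsum qs.
Proof. induction 1; simpl; lra. Qed.

Lemma lincomb_sub {n} (x : vec n) ps i :
  lincomb (map (fun pl => (vsub x (fst pl), snd pl)) ps) i = wsum ps * x i - lincomb ps i.
Proof.
  induction ps as [|[p l] ps IH]; simpl; unfold vadd, vscale, vsub, vzero in *; simpl in *; [lra|].
  rewrite IH; lra.
Qed.

Definition scale_weights {n} (c : R) (ps : list (vec n * R)) : list (vec n * R) :=
  map (fun pl => (fst pl, c * snd pl)) ps.

Lemma lincomb_scale_weights {n} c (ps : list (vec n * R)) i :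
  lincomb (scale_weights c ps) i = c * lincomb ps i.
Proof.
  induction ps as [|[p l] ps IH]; simpl; unfold vadd, vscale, vzero in *; simpl in *; [lra|].
  rewrite IH; lra.
Qed.

Lemma wsum_scale_weights {n} c (ps : list (vec n * R)) : wsum (scale_weights c ps) = c * wsum ps.
Proof. induction ps as [|[p l] ps IH]; simpl; [lra|]. rewrite IH; lra. Qed.

Lemma lincomb_mix {n} a b (ps qs : list (vec n * R)) :
  lincomb (scale_weights a ps ++ scale_weights b qs) =
  vadd (vscale a (lincomb ps)) (vscale b (lincomb qs)).
Proof.
  apply vec_ext; intro i. unfold vadd, vscale.
  rewrite lincomb_app, !lincomb_scale_weights; reflexivity.
Qed.

Definition weighted_in {n} (S : vec n -> Prop) (ps : list (vec n * R)) : Prop :=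
  Forall (fun pl => S (fst pl) /\ 0 <= snd pl) ps.

Lemma weighted_in_mono {n} (S S' : vec n -> Prop) ps :
  (forall p, S p -> S' p) -> weighted_in S ps -> weighted_in S' ps.
Proof. intros H; apply Forall_impl; intros [p l] [Hp Hl]; auto. Qed.

Lemma weighted_in_scale_weights {n} (S : vec n -> Prop) c ps :
  0 <= c -> weighted_in S ps -> weighted_in S (scale_weights c ps).
Proof.
  intros Hc H; induction H as [|[p l] ps [Hp Hl] _ IH]; simpl; constructor; auto.
  simpl in *; split; [exact Hp|nra].
Qed.

Lemma wsum_nonneg {n} (S : vec n -> Prop) ps : weighted_in S ps -> 0 <= wsum ps.
Proof. induction 1 as [|[p l] ps [_ Hl] _ IH]; simpl in *; lra. Qed.

Lemma weighted_in_pos_entry {n} (S : vec n -> Prop) ps :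
  weighted_in S ps -> wsum ps = 1 -> exists p a, In (p, a) ps /\ 0 < a.
Proof.
  induction 1 as [|[p l] ps [_ Hl] _ IH]; simpl; intro Hw; [lra|].
  destruct (Rlt_dec 0 l) as [Hpos|Hpos].
  - exists p, l; auto.
  - destruct IH as [q [a [Hin Ha]]]; [simpl in Hl; lra|]. exists q, a; auto.
Qed.

Definition convex {n} (C : vec n -> Prop) : Prop :=
  forall p q l, C p -> C q -> 0 <= l <= 1 -> C (vadd (vscale l p) (vscale (1 - l) q)).

Lemma conv_mono {n} (S S' : vec n -> Prop) x :
  (forall p, S p -> S' p) -> conv S x -> conv S' x.
Proof. intros H [ps [Hps Hx]]; exists ps; split; [exact (weighted_in_mono S S' ps H Hps)|exact Hx]. Qed.

Lemma conv_of_mem {n} (S : vec n -> Prop) x : S x -> conv S x.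
Proof.
  intros Hx; exists [(x, 1)]; split; [repeat constructor; simpl; auto; lra|split; [simpl; lra|]].
  apply vec_ext; intro i; simpl; unfold vadd, vscale, vzero; lra.
Qed.

Lemma conv_convex {n} (S : vec n -> Prop) : convex (conv S).
Proof.
  intros p q l [ps [Hps [Wp ->]]] [qs [Hqs [Wq ->]]] Hl.
  exists (scale_weights l ps ++ scale_weights (1 - l) qs); split; [|split].
  - apply Forall_app; split; apply weighted_in_scale_weights; auto; lra.
  - rewrite wsum_app, !wsum_scale_weights, Wp, Wq; lra.
  - symmetry; apply lincomb_mix.
Qed.
Lemma convex_cone_comb {n} (C : vec n -> Prop) a1 a2 l1 l2 :
  convex C -> C a1 -> C a2 -> 0 <= l1 -> 0 <= l2 ->
  exists c, C c /\ vadd (vscale l1 a1) (vscale l2 a2) = vscale (l1 + l2) c.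
Proof.
  intros HC H1 H2 Hl1 Hl2.
  destruct (Req_dec (l1 + l2) 0) as [Z|Z].
  - exists a1; split; [exact H1|].
    apply vec_ext; intro i; unfold vadd, vscale.
    replace l1 with 0 by lra; replace l2 with 0 by lra; lra.
  - exists (vadd (vscale (l1 / (l1 + l2)) a1) (vscale (1 - l1 / (l1 + l2)) a2)); split.
    + apply HC; auto. apply ratio_bounds; lra.
    + apply vec_ext; intro i; unfold vadd, vscale; field; exact Z.
Qed.

Lemma lincomb_in_cone {n} (S C : vec n -> Prop) c0 ps :
  convex C -> (forall p, S p -> C p) -> C c0 -> weighted_in S ps ->
  exists c, C c /\ lincomb ps = vscale (wsum ps) c.
Proof.
  intros HC HS Hc0; induction 1 as [|[p l] ps [Hp Hl] Hps [c [Hc Ec]]].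
  - exists c0; split; [exact Hc0|]. apply vec_ext; intro i; simpl; unfold vscale, vzero; lra.
  - simpl in Hp, Hl.
    destruct (convex_cone_comb C p c l (wsum ps) HC (HS p Hp) Hc Hl (wsum_nonneg S ps Hps))
      as [c' [Hc' Ec']].
    exists c'; split; [exact Hc'|]. simpl. rewrite <- Ec'. fold (lincomb ps). rewrite Ec. reflexivity.
Qed.

Lemma conv_in_convex {n} (S C : vec n -> Prop) x :
  convex C -> (forall p, S p -> C p) -> conv S x -> C x.
Proof.
  intros HC HS [ps [Hps [Hw ->]]].
  destruct (weighted_in_pos_entry S ps Hps Hw) as [p [a [Hin _]]].
  assert (Hp : S p) by (rewrite Forall_forall in Hps; exact (proj1 (Hps _ Hin))).
  destruct (lincomb_in_cone S C p ps HC HS (HS p Hp) Hps) as [c [Hc ->]].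
  rewrite Hw. replace (vscale 1 c) with c; [exact Hc|].
  apply vec_ext; intro i; unfold vscale; lra.
Qed.

(** * Consequences of discrete conicity *)

Section SortByKey.
Variables (A : Type) (key : A -> R).

Lemma StronglySorted_insert a l :
  StronglySorted (fun a b => key a <= key b) l ->
  exists l', Permutation (a :: l) l' /\ StronglySorted (fun a b => key a <= key b) l'.
Proof.
  induction l as [|b l IH]; intros Hs.
  - exists [a]; split; [reflexivity|repeat constructor].
  - apply StronglySorted_inv in Hs as [Hl Hb].
    destruct (Rle_dec (key a) (key b)) as [Hab|Hab].
    + exists (a :: b :: l); split; [reflexivity|].
      constructor; [constructor; auto|].
      constructor; [exact Hab|]. eapply Forall_impl; [|exact Hb]; simpl; intros; lra.
    + destruct (IH Hl) as [l' [Hp Hs']].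
      exists (b :: l'); split.
      * rewrite perm_swap. apply perm_skip, Hp.
      * constructor; [exact Hs'|].
        apply (Permutation_Forall Hp). constructor; [lra|exact Hb].
Qed.

Lemma StronglySorted_permutation l :
  exists l', Permutation l l' /\ StronglySorted (fun a b => key a <= key b) l'.
Proof.
  induction l as [|a l [l' [Hp Hs]]].
  - exists []; split; constructor.
  - destruct (StronglySorted_insert a l' Hs) as [l'' [Hp' Hs']].
    exists l''; split; [rewrite Hp; exact Hp'|exact Hs'].
Qed.

End SortByKey.

Lemma StronglySorted_map {A B} (g : A -> B) (Rel : B -> B -> Prop) l :
  StronglySorted (fun a b => Rel (g a) (g b)) l -> StronglySorted Rel (map g l).
Proof.
  induction 1; simpl; constructor; [assumption|]. apply Forall_map; assumption.
Qed.

Lemma StronglySorted_snoc {A} (Rel : A -> A -> Prop) l x :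
  StronglySorted Rel l -> Forall (fun a => Rel a x) l -> StronglySorted Rel (l ++ [x]).
Proof.
  induction 1 as [|a l _ IH Ha]; intros Hx; simpl.
  - repeat constructor.
  - inversion Hx; subst. constructor; [auto|]. apply Forall_app; auto.
Qed.

Lemma discretely_conic_face {n} (D : vec n -> Prop) f x ps p0 a0 :
  discretely_conic D f -> D x ->
  weighted_in (fun p => D p /\ f p <= f x) ps -> wsum ps = 1 -> x = lincomb ps ->
  In (p0, a0) ps -> 0 < a0 -> f x <= f p0.
Proof.
  intros hconic Dx Hps Hw Hx Hin Ha0.
  destruct (in_split _ _ Hin) as [ps1 [ps2 ->]].
  apply Forall_app in Hps as [Hps1 Hps2]. apply Forall_cons_iff in Hps2 as [[[Dp0 _] _] Hps2].
  (* p0 = x + sum_(j <> 0) (a_j / a0) (x - p_j), using sum_j a_j = 1 *)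
  set (rest := scale_weights (/ a0) (ps1 ++ ps2)).
  assert (Hrest : weighted_in (fun p => D p /\ f p <= f x) rest).
  { apply weighted_in_scale_weights; [apply Rlt_le, Rinv_0_lt_compat; exact Ha0|].
    apply Forall_app; auto. }
  destruct (StronglySorted_permutation _ (fun pl => f (fst pl)) rest) as [qs [Hperm Hsort]].
  assert (Hqs : weighted_in (fun p => D p /\ f p <= f x) qs) by exact (Permutation_Forall Hperm Hrest).
  apply (hconic qs x p0 Dp0 Dx).
  - eapply weighted_in_mono; [|exact Hqs]; simpl; tauto.
  - apply StronglySorted_Sorted, StronglySorted_snoc.
    + exact (StronglySorted_map fst (fun a b => f a <= f b) qs Hsort).
    + apply Forall_map. eapply Forall_impl; [|exact Hqs]; simpl; tauto.
  - apply vec_ext; intro i.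
    pose proof (f_equal (fun v => v i) Hx) as Hxi; simpl in Hxi.
    rewrite lincomb_app in Hxi; simpl in Hxi; unfold vadd, vscale in Hxi; simpl in Hxi.
    rewrite wsum_app in Hw; simpl in Hw.
    unfold vadd; rewrite lincomb_sub, <- (wsum_perm _ _ Hperm), <- (lincomb_perm _ _ i Hperm).
    unfold rest; rewrite wsum_scale_weights, lincomb_scale_weights, wsum_app, lincomb_app.
    field_simplify_eq; [|lra]. nra.
Qed.

Lemma discretely_conic_mix {n} (D : vec n -> Prop) f x a b s :
  discretely_conic D f -> D x ->
  conv (fun p => D p /\ f p < f x) a -> conv (fun p => D p /\ f p <= f x) b ->
  0 <= s < 1 -> x <> vadd (vscale (1 - s) a) (vscale s b).
Proof.
  intros hconic Dx [ps [Hps [Wp ->]]] [qs [Hqs [Wq ->]]] Hs Ex.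
  destruct (weighted_in_pos_entry (fun p => D p /\ f p < f x) ps Hps Wp) as [p0 [a0 [Hin Ha0]]].
  assert (Hp0 : f p0 < f x) by (rewrite Forall_forall in Hps; exact (proj2 (proj1 (Hps _ Hin)))).
  apply (Rlt_not_le _ _ Hp0).
  apply (discretely_conic_face D f x (scale_weights (1 - s) ps ++ scale_weights s qs)
           p0 ((1 - s) * a0));
    auto.
  - apply Forall_app; split;
      apply (weighted_in_scale_weights (fun p => D p /\ f p <= f x)); try lra; auto.
    apply (weighted_in_mono (fun p => D p /\ f p < f x)); [|exact Hps].
    intros p [? ?]; split; [auto|lra].
  - rewrite wsum_app, !wsum_scale_weights, Wp, Wq; lra.
  - rewrite lincomb_mix; exact Ex.
  - apply in_or_app; left. exact (in_map (fun pl => (fst pl, (1 - s) * snd pl)) _ _ Hin).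
  - nra.
Qed.

(** * The boundary condition *)

Lemma vec_bounded {n} (h : vec n) : exists K, 0 < K /\ forall i, Rabs (h i) <= K.
Proof.
  induction n as [|n IH].
  - exists 1; split; [lra|]. intro i; inversion i.
  - destruct (IH (fun i => h (Fin.FS i))) as [K [HK Hb]].
    exists (Rmax K (Rabs (h Fin.F1))); split.
    + eapply Rlt_le_trans; [exact HK|apply Rmax_l].
    + intro i. apply (Fin.caseS' i (fun i => Rabs (h i) <= _)); [apply Rmax_r|].
      intro j; eapply Rle_trans; [apply Hb|apply Rmax_l].
Qed.

Lemma relbd_of_escaping_ray {n} (C : vec n -> Prop) x a :
  C x -> C a -> (forall t, 0 < t -> ~ C (vadd x (vscale t (vsub x a)))) -> relbd C x.
Proof.
  intros Cx Ca Hesc; split.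
  - exists [(x, 1)]; split; [repeat constructor; exact Cx|split; [simpl; lra|]].
    apply vec_ext; intro i; simpl; unfold vadd, vscale, vzero; lra.
  - intros eps He; split.
    + exists x; split; [exact Cx|]. intro i; rewrite Rminus_diag, Rabs_R0; exact He.
    + destruct (vec_bounded (vsub x a)) as [K [HK Hb]].
      set (t := eps / (2 * K)).
      assert (Ht : 0 < t) by (apply Rdiv_lt_0_compat; lra).
      exists (vadd x (vscale t (vsub x a))); split; [|split].
      * exists [(x, 1 + t); (a, - t)]; split; [repeat constructor; auto|split; [simpl; lra|]].
        apply vec_ext; intro i; simpl; unfold vadd, vscale, vsub, vzero; lra.
      * exact (Hesc t Ht).
      * intro i; unfold vadd, vscale.
        replace (x i + t * vsub x a i - x i) with (t * vsub x a i) by ring.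
        rewrite Rabs_mult, Rabs_pos_eq by lra.
        assert (t * K = eps / 2) by (unfold t; field; lra).
        pose proof (Hb i). nra.
Qed.

Lemma MINU_dom {n} (D : vec n -> Prop) f j x : MINU D f j x -> D x.
Proof. induction j as [|j IH]; simpl; [tauto|]. intros [H|[H _]]; auto. Qed.

Lemma MINU_mono {n} (D : vec n -> Prop) f j k x : (j <= k)%nat -> MINU D f j x -> MINU D f k x.
Proof. induction 1; simpl; auto. Qed.

Lemma MINU_lt {n} (D : vec n -> Prop) f j y x :
  MINU D f j y -> D x -> ~ MINU D f j x -> f y < f x.
Proof.
  revert y x; induction j as [|j IH]; simpl; intros y x Hy Dx Nx; [contradiction|].
  destruct Hy as [Hy|[Dy [Ny My]]]; [apply IH; tauto|].
  apply Rnot_le_lt; intro Hxy. apply Nx; right; split; [exact Dx|split; [tauto|]].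
  intros z Dz Nz. specialize (My z Dz Nz). lra.
Qed.

Lemma MIN_succ {n} (D : vec n -> Prop) f j x :
  MIN D f (S j) x -> D x /\ ~ MINU D f j x /\ forall z, D z -> ~ MINU D f j z -> f x <= f z.
Proof. intros [[H|H] N]; [contradiction|exact H]. Qed.

Lemma MIN_relbd {n} (D : vec n -> Prop) f i x :
  discretely_conic D f -> (2 <= i)%nat -> MIN D f i x -> relbd (conv (MINU D f i)) x.
Proof.
  intros hconic Hi Hx. destruct i as [|j]; [lia|].
  pose proof Hx as [HxU _]. apply MIN_succ in Hx as [Dx [Nx Mx]].
  assert (Hsub : forall y, MINU D f (S j) y -> D y /\ f y <= f x).
  { intros y Hy; split; [exact (MINU_dom D f _ y Hy)|].
    destruct Hy as [Hy|[_ [_ My]]]; [apply Rlt_le, (MINU_lt D f j); auto|auto]. }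
  assert (Ha : exists a, MINU D f j a).
  { apply NNPP; intro Nempty. apply Nx, (MINU_mono D f 1); [lia|].
    right; split; [exact Dx|split; [tauto|]].
    intros z Dz _. apply Mx; [exact Dz|]. intro Hz; apply Nempty; exists z; exact Hz. }
  destruct Ha as [a Ha].
  apply (relbd_of_escaping_ray _ x a);
    [apply conv_of_mem; exact HxU|apply conv_of_mem; left; exact Ha|].
  intros t Ht Hy.
  apply (discretely_conic_mix D f x a (vadd x (vscale t (vsub x a))) (/ (1 + t)) hconic Dx).
  - apply conv_of_mem; split; [exact (MINU_dom D f j a Ha)|exact (MINU_lt D f j a x Ha Dx Nx)].
  - eapply conv_mono; [|exact Hy]. exact Hsub.
  - split; [apply Rlt_le, Rinv_0_lt_compat; lra|].
    rewrite <- Rinv_1; apply Rinv_lt_contravar; lra.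
  - apply vec_ext; intro k; unfold vadd, vscale, vsub; field; lra.
Qed.

(** * Closedness of polytopes and of their mixtures *)

Definition is_glb (E : R -> Prop) (m : R) : Prop :=
  (forall c, E c -> m <= c) /\ (forall m', (forall c, E c -> m' <= c) -> m' <= m).

Lemma glb_exists (E : R -> Prop) :
  (exists c, E c) -> (exists b, forall c, E c -> b <= c) -> exists m, is_glb E m.
Proof.
  intros [c Hc] [b Hb].
  destruct (completeness (fun y => E (- y))) as [m [Hub Hlub]].
  - exists (- b); intros y Hy; specialize (Hb _ Hy); lra.
  - exists (- c); rewrite Ropp_involutive; exact Hc.
  - exists (- m); split.
    + intros c' Hc'. assert (- c' <= m) by (apply Hub; rewrite Ropp_involutive; exact Hc'). lra.
    + intros m' Hm'. assert (m <= - m') by (apply Hlub; intros y Hy; specialize (Hm' _ Hy); lra). lra.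
Qed.

Definition glb (E : R -> Prop) : R := epsilon (inhabits 0) (is_glb E).

Lemma glb_spec (E : R -> Prop) :
  (exists c, E c) -> (exists b, forall c, E c -> b <= c) -> is_glb E (glb E).
Proof. intros Hne Hb; unfold glb; apply epsilon_spec, glb_exists; assumption. Qed.

Lemma is_glb_lt (E : R -> Prop) m y : is_glb E m -> m < y -> exists c, E c /\ c < y.
Proof.
  intros [_ Hgreatest] Hy. apply NNPP; intro N.
  assert (y <= m); [|lra].
  apply Hgreatest; intros c Hc; apply Rnot_lt_le; intro; apply N; eauto.
Qed.

Definition closed_set {n} (S : vec n -> Prop) : Prop :=
  forall y, (forall eps, 0 < eps -> exists c, S c /\ ball y eps c) -> S y.

Lemma ball_eq {n} (y p : vec n) : (forall eps, 0 < eps -> ball y eps p) -> p = y.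
Proof.
  intros H; apply vec_ext; intro i. apply NNPP; intro Ne.
  assert (Hpos : 0 < Rabs (p i - y i)) by (apply Rabs_pos_lt; lra).
  specialize (H _ Hpos i); lra.
Qed.

Lemma box_convex {n} (K : R) : convex (fun c : vec n => forall i, Rabs (c i) <= K).
Proof.
  intros p q l Hp Hq Hl i; unfold vadd, vscale.
  eapply Rle_trans; [apply Rabs_triang|].
  rewrite !Rabs_mult, (Rabs_pos_eq l), (Rabs_pos_eq (1 - l)) by lra.
  specialize (Hp i); specialize (Hq i); nra.
Qed.

Lemma conv_list_bounded {n} (L : list (vec n)) :
  exists K, 0 <= K /\ forall c, conv (fun q => In q L) c -> forall i, Rabs (c i) <= K.
Proof.
  assert (HL : exists K, 0 <= K /\ forall q, In q L -> forall i, Rabs (q i) <= K).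
  { induction L as [|p L [K [HK0 HK]]]; [exists 0; split; [lra|intros q []]|].
    destruct (vec_bounded p) as [Kp [_ Hp]].
    exists (Rmax K Kp); split; [eapply Rle_trans; [exact HK0|apply Rmax_l]|].
    intros q [<-|Hq] i.
    - eapply Rle_trans; [apply Hp|apply Rmax_r].
    - eapply Rle_trans; [apply HK; exact Hq|apply Rmax_l]. }
  destruct HL as [K [HK0 HK]]; exists K; split; [exact HK0|]; intros c Hc.
  exact (conv_in_convex _ _ c (box_convex K) HK Hc).
Qed.

Lemma conv_nil {n} (x : vec n) : ~ conv (fun q => In q []) x.
Proof.
  intro Hx. refine (conv_in_convex _ (fun _ => False) x _ _ Hx); [|intros _ []].
  intros p q l [].
Qed.

Lemma conv_singleton {n} (p x : vec n) : conv (fun q => In q [p]) x -> x = p.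
Proof.
  apply (conv_in_convex _ (fun q => q = p)); [|intros q [<-|[]]; reflexivity].
  intros q r l -> -> _; apply vec_ext; intro i; unfold vadd, vscale; ring.
Qed.

Lemma conv_cons_split {n} (p c0 : vec n) L c :
  conv (fun q => In q L) c0 -> conv (fun q => In q (p :: L)) c ->
  exists t c', 0 <= t <= 1 /\ conv (fun q => In q L) c' /\ c = vadd (vscale t p) (vscale (1 - t) c').
Proof.
  intros Hc0. apply (conv_in_convex _ (fun c => exists t c', 0 <= t <= 1 /\
    conv (fun q => In q L) c' /\ c = vadd (vscale t p) (vscale (1 - t) c'))).
  - intros x y l [t1 [c1 [Ht1 [Hc1 ->]]]] [t2 [c2 [Ht2 [Hc2 ->]]]] Hl.
    destruct (convex_cone_comb _ c1 c2 (l * (1 - t1)) ((1 - l) * (1 - t2)) (conv_convex _) Hc1 Hc2)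
      as [c' [Hc' Ec]]; try nra.
    exists (l * t1 + (1 - l) * t2), c'; split; [nra|split; [exact Hc'|]].
    apply vec_ext; intro i.
    pose proof (f_equal (fun v => v i) Ec) as Eci; unfold vadd, vscale in *.
    replace (1 - (l * t1 + (1 - l) * t2)) with (l * (1 - t1) + (1 - l) * (1 - t2)) by ring.
    rewrite <- Eci; ring.
  - intros q [<-|Hq].
    + exists 1, c0; split; [lra|split; [exact Hc0|]].
      apply vec_ext; intro i; unfold vadd, vscale; ring.
    + exists 0, q; split; [lra|split; [apply conv_of_mem; exact Hq|]].
      apply vec_ext; intro i; unfold vadd, vscale; ring.
Qed.

Lemma lipschitz_continuity_pt (phi : R -> R) K c :
  0 <= K -> (forall t t', phi t <= phi t' + K * Rabs (t - t')) -> continuity_pt phi c.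
Proof.
  intros HK Lip eps He. exists (eps / (K + 1)); split; [apply Rdiv_lt_0_compat; lra|].
  intros t [_ Ht]; simpl in *; unfold R_dist in *.
  pose proof (Lip t c) as L1; pose proof (Lip c t) as L2; rewrite Rabs_minus_sym in L2.
  assert (E : eps / (K + 1) * (K + 1) = eps) by (field; lra).
  assert (K * Rabs (t - c) < eps) by (pose proof (Rabs_pos (t - c)); nra).
  apply Rabs_def1; lra.
Qed.

Lemma conv_list_closed {n} (L : list (vec n)) : closed_set (conv (fun q => In q L)).
Proof.
  induction L as [|p L IH]; intros y Hy.
  - destruct (Hy 1 Rlt_0_1) as [c [Hc _]]; destruct (conv_nil c Hc).
  - assert (Hp : conv (fun r => In r (p :: L)) p) by (apply conv_of_mem; left; reflexivity).
    destruct L as [|q L'].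
    { replace y with p; [exact Hp|].
      apply ball_eq; intros eps He. destruct (Hy eps He) as [c [Hc Hb]].
      rewrite <- (conv_singleton p c Hc); exact Hb. }
    set (M := q :: L') in *.
    assert (Hq : conv (fun r => In r M) q) by (apply conv_of_mem; left; reflexivity).
    destruct (conv_list_bounded M) as [B [HB0 HB]].
    destruct (vec_bounded p) as [Kp [HKp HpK]].
    set (K := Kp + B).
    assert (HK : forall c, conv (fun r => In r M) c -> forall i, Rabs (p i - c i) <= K).
    { intros c Hc i. pose proof (HB c Hc i); pose proof (HpK i).
      unfold Rminus; eapply Rle_trans; [apply Rabs_triang|]; rewrite Rabs_Ropp; unfold K; lra. }
    (* [phi t] is the sup-distance from [y] to the points [t p + (1 - t) c], [c] in [conv M]. *)
    set (E := fun t e => 0 < e /\ exists c, conv (fun r => In r M) c /\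
                ball y e (vadd (vscale t p) (vscale (1 - t) c))).
    set (phi := fun t => glb (E t)).
    assert (Hphi : forall t, is_glb (E t) (phi t)).
    { intro t; apply glb_spec; [|exists 0; intros e [He _]; lra].
      destruct (vec_bounded (vsub (vadd (vscale t p) (vscale (1 - t) q)) y)) as [e [He Hb]].
      exists (e + 1); split; [lra|]. exists q; split; [exact Hq|].
      intro i; specialize (Hb i); unfold vsub in Hb; lra. }
    assert (Lip : forall t t', phi t <= phi t' + K * Rabs (t - t')).
    { intros t t'. cut (phi t - K * Rabs (t - t') <= phi t'); [lra|].
      apply (proj2 (Hphi t')). intros e [He [c [Hc Hb]]].
      cut (phi t <= e + K * Rabs (t - t')); [lra|].
      pose proof (Rabs_pos (t - t')).
      apply (proj1 (Hphi t)). split; [unfold K; nra|]. exists c; split; [exact Hc|].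
      intro i. specialize (Hb i). unfold vadd, vscale in *.
      replace (t * p i + (1 - t) * c i - y i)
        with ((t' * p i + (1 - t') * c i - y i) + (t - t') * (p i - c i)) by ring.
      eapply Rle_lt_trans; [apply Rabs_triang|]. rewrite Rabs_mult.
      pose proof (HK c Hc i); nra. }
    destruct (continuity_ab_min phi 0 1 Rle_0_1
                (fun c _ => lipschitz_continuity_pt phi K c ltac:(unfold K; lra) Lip))
      as [ts [Hmin Hts]].
    assert (Hzero : phi ts <= 0).
    { apply Rnot_lt_le; intro Hpos.
      destruct (Hy (phi ts / 2)) as [c [Hc Hb]]; [lra|].
      destruct (conv_cons_split p q M c Hq Hc) as [t [c' [Ht [Hc' ->]]]].
      assert (phi t <= phi ts / 2) by (apply (proj1 (Hphi t)); split; [lra|exists c'; auto]).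
      specialize (Hmin t Ht); lra. }
    assert (Happ : forall eps, 0 < eps -> exists c, conv (fun r => In r M) c /\
                     ball y eps (vadd (vscale ts p) (vscale (1 - ts) c))).
    { intros eps He. destruct (is_glb_lt _ _ eps (Hphi ts)) as [e [[_ [c [Hc Hb]]] Hlt]]; [lra|].
      exists c; split; [exact Hc|]. intro i; specialize (Hb i); lra. }
    destruct (Req_dec ts 1) as [->|Hts1].
    + replace y with p; [exact Hp|].
      apply ball_eq; intros eps He. destruct (Happ eps He) as [c [_ Hb]].
      intro i; specialize (Hb i); unfold vadd, vscale in Hb.
      replace (p i) with (1 * p i + (1 - 1) * c i) by ring. exact Hb.
    + set (y' := vscale (/ (1 - ts)) (vsub y (vscale ts p))).
      assert (Hy' : conv (fun r => In r M) y').
      { apply IH; intros eps He.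
        destruct (Happ (eps * (1 - ts))) as [c [Hc Hb]]; [nra|].
        exists c; split; [exact Hc|]. intro i; specialize (Hb i).
        unfold y', vadd, vscale, vsub in *.
        replace (c i - / (1 - ts) * (y i - ts * p i))
          with (/ (1 - ts) * (ts * p i + (1 - ts) * c i - y i)) by (field; lra).
        rewrite Rabs_mult, Rabs_pos_eq by (apply Rlt_le, Rinv_0_lt_compat; lra).
        apply Rmult_lt_reg_l with (1 - ts); [lra|].
        rewrite <- Rmult_assoc, Rinv_r by lra. lra. }
      replace y with (vadd (vscale ts p) (vscale (1 - ts) y')).
      * apply conv_convex; [exact Hp| |lra].
        apply (conv_mono (fun r => In r M)); [intros r Hr; right; exact Hr|exact Hy'].
      * apply vec_ext; intro i; unfold y', vadd, vscale, vsub; field; lra.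
Qed.

Definition mix {n} (A B : vec n -> Prop) (s : R) (x : vec n) : Prop :=
  exists a b, A a /\ B b /\ x = vadd (vscale (1 - s) a) (vscale s b).

Lemma mix_of {n} (A B : vec n -> Prop) s x : A x -> B x -> mix A B s x.
Proof.
  intros Ha Hb; exists x, x; repeat split; auto.
  apply vec_ext; intro i; unfold vadd, vscale; ring.
Qed.

Lemma mix_one_intro {n} (A B : vec n -> Prop) a x : A a -> B x -> mix A B 1 x.
Proof.
  intros Ha Hb; exists a, x; repeat split; auto.
  apply vec_ext; intro i; unfold vadd, vscale; ring.
Qed.

Lemma mix_zero {n} (A B : vec n -> Prop) x : mix A B 0 x -> A x.
Proof.
  intros [a [b [Ha [_ ->]]]]. replace (vadd (vscale (1 - 0) a) (vscale 0 b)) with a; [exact Ha|].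
  apply vec_ext; intro i; unfold vadd, vscale; ring.
Qed.

Lemma mix_comb {n} (A B : vec n -> Prop) s1 s2 l y z :
  convex A -> convex B -> 0 <= l <= 1 -> 0 <= s1 <= 1 -> 0 <= s2 <= 1 ->
  mix A B s1 y -> mix A B s2 z ->
  mix A B (l * s1 + (1 - l) * s2) (vadd (vscale l y) (vscale (1 - l) z)).
Proof.
  intros HA HB Hl H1 H2 [a1 [b1 [Ha1 [Hb1 ->]]]] [a2 [b2 [Ha2 [Hb2 ->]]]].
  destruct (convex_cone_comb A a1 a2 (l * (1 - s1)) ((1 - l) * (1 - s2)) HA Ha1 Ha2) as [a [Ha Ea]];
    try nra.
  destruct (convex_cone_comb B b1 b2 (l * s1) ((1 - l) * s2) HB Hb1 Hb2) as [b [Hb Eb]]; try nra.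
  exists a, b; split; [exact Ha|split; [exact Hb|]].
  apply vec_ext; intro i.
  pose proof (f_equal (fun v => v i) Ea) as Eai; pose proof (f_equal (fun v => v i) Eb) as Ebi.
  unfold vadd, vscale in *.
  replace (1 - (l * s1 + (1 - l) * s2)) with (l * (1 - s1) + (1 - l) * (1 - s2)) by ring.
  rewrite <- Eai, <- Ebi; ring.
Qed.

Lemma mix_convex {n} (A B : vec n -> Prop) s :
  convex A -> convex B -> 0 <= s <= 1 -> convex (mix A B s).
Proof.
  intros HA HB Hs y z l Hy Hz Hl.
  replace s with (l * s + (1 - l) * s) at 1 by ring.
  apply mix_comb; assumption.
Qed.

Lemma mix_up {n} (A B : vec n -> Prop) s s' x :
  convex B -> (forall a, A a -> B a) -> 0 <= s <= s' -> mix A B s x -> mix A B s' x.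
Proof.
  intros HB HAB Hs [a [b [Ha [Hb ->]]]].
  destruct (convex_cone_comb B a b (s' - s) s HB (HAB a Ha) Hb) as [b' [Hb' Eb']]; try lra.
  exists a, b'; split; [exact Ha|split; [exact Hb'|]].
  apply vec_ext; intro i. pose proof (f_equal (fun v => v i) Eb') as Ei.
  unfold vadd, vscale in *. replace (s' - s + s) with s' in Ei by ring.
  rewrite <- Ei; ring.
Qed.

Lemma mix_top {n} (A B : vec n -> Prop) s x :
  convex B -> (forall a, A a -> B a) -> 0 <= s <= 1 -> mix A B s x -> B x.
Proof.
  intros HB HAB Hs [a [b [Ha [Hb ->]]]].
  replace (vadd (vscale (1 - s) a) (vscale s b))
    with (vadd (vscale (1 - s) a) (vscale (1 - (1 - s)) b)).
  - apply HB; auto; lra.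
  - f_equal; f_equal; ring.
Qed.

Lemma convex_translate_preimage {n} (C : vec n -> Prop) c v :
  convex C -> convex (fun a => C (vadd (vscale c a) v)).
Proof.
  intros HC p q l Hp Hq Hl.
  replace (vadd (vscale c (vadd (vscale l p) (vscale (1 - l) q))) v)
    with (vadd (vscale l (vadd (vscale c p) v)) (vscale (1 - l) (vadd (vscale c q) v))).
  - apply HC; assumption.
  - apply vec_ext; intro i; unfold vadd, vscale; ring.
Qed.

Lemma mix_conv_lists {n} (LA LB : list (vec n)) s x :
  0 <= s <= 1 ->
  (mix (conv (fun a => In a LA)) (conv (fun b => In b LB)) s x <->
   conv (fun q => In q (map (fun ab => vadd (vscale (1 - s) (fst ab)) (vscale s (snd ab)))
                            (list_prod LA LB))) x).
Proof.
  intros Hs.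
  set (ML := map (fun ab => vadd (vscale (1 - s) (fst ab)) (vscale s (snd ab))) (list_prod LA LB)).
  assert (Hcomm : forall u v : vec n, vadd u v = vadd v u)
    by (intros u v; apply vec_ext; intro i; unfold vadd; ring).
  split.
  - intros [a [b [Ha [Hb ->]]]].
    refine (conv_in_convex _ (fun a => conv (fun q => In q ML) (vadd (vscale (1 - s) a) (vscale s b)))
              a (convex_translate_preimage _ _ _ (conv_convex _)) _ Ha).
    clear a Ha; intros a Ha. rewrite Hcomm.
    refine (conv_in_convex _ (fun b => conv (fun q => In q ML) (vadd (vscale s b) (vscale (1 - s) a)))
              b (convex_translate_preimage _ _ _ (conv_convex _)) _ Hb).
    clear b Hb; intros b Hb. rewrite Hcomm. apply conv_of_mem.
    exact (in_map (fun ab => vadd (vscale (1 - s) (fst ab)) (vscale s (snd ab))) _ (a, b)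
             (in_prod _ _ _ _ Ha Hb)).
  - apply conv_in_convex; [apply mix_convex; auto using conv_convex|].
    intros q Hq. apply in_map_iff in Hq as [[a b] [<- Hab]]. apply in_prod_iff in Hab as [Ha Hb].
    exists a, b; split; [apply conv_of_mem; exact Ha|split; [apply conv_of_mem; exact Hb|reflexivity]].
Qed.

Lemma mix_conv_lists_closed {n} (LA LB : list (vec n)) s :
  0 <= s <= 1 -> closed_set (mix (conv (fun a => In a LA)) (conv (fun b => In b LB)) s).
Proof.
  intros Hs y Hy. apply (mix_conv_lists LA LB s y Hs), conv_list_closed.
  intros eps He. destruct (Hy eps He) as [c [Hc Hb]].
  exists c; split; [apply (mix_conv_lists LA LB s c Hs); exact Hc|exact Hb].
Qed.

Lemma mix_limit {n} (A B : vec n -> Prop) K s0 x :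
  closed_set (mix A B s0) -> (forall p, A p \/ B p -> forall i, Rabs (p i) <= K) -> s0 < 1 ->
  (forall s, s0 < s <= 1 -> mix A B s x) -> mix A B s0 x.
Proof.
  intros Hclosed HK Hs0 Hmix. apply Hclosed; intros eps He.
  assert (HK0 := Rabs_pos K).
  set (d := eps / (2 * (2 * Rabs K + 1))).
  assert (Hd : 0 < d) by (unfold d; apply Rdiv_lt_0_compat; lra).
  set (s := Rmin 1 (s0 + d)).
  assert (Hs : s0 < s <= s0 + d) by (unfold s; split; [apply Rmin_glb_lt; lra|apply Rmin_r]).
  destruct (Hmix s) as [a [b [Ha [Hb ->]]]]; [split; [lra|apply Rmin_l]|].
  exists (vadd (vscale (1 - s0) a) (vscale s0 b)); split; [exists a, b; auto|].
  intro i; unfold vadd, vscale.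
  replace ((1 - s0) * a i + s0 * b i - ((1 - s) * a i + s * b i)) with ((s - s0) * (a i - b i))
    by ring.
  rewrite Rabs_mult, Rabs_pos_eq by lra.
  assert (Rabs (a i - b i) <= 2 * Rabs K).
  { unfold Rminus; eapply Rle_trans; [apply Rabs_triang|]; rewrite Rabs_Ropp.
    pose proof (HK a (or_introl Ha) i); pose proof (HK b (or_intror Hb) i); pose proof (Rle_abs K).
    lra. }
  assert (d * (2 * (2 * Rabs K + 1)) = eps) by (unfold d; field; lra).
  pose proof (Rabs_pos (a i - b i)); nra.
Qed.

(** * The conic extension *)

Lemma list_max_by {A} (g : A -> R) (P : A -> Prop) l :
  (exists a, In a l /\ P a) -> exists b, In b l /\ P b /\ forall a, In a l -> P a -> g a <= g b.
Proof.
  induction l as [|a l IH]; intros [a0 [Ha0 Pa0]]; [destruct Ha0|].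
  destruct (classic (exists a', In a' l /\ P a')) as [Hl|Hl].
  - destruct (IH Hl) as [b [Hb [Pb Mb]]].
    destruct (classic (P a /\ g b < g a)) as [[Pa Hab]|Hab].
    + exists a; split; [left; reflexivity|split; [exact Pa|]].
      intros a' [<-|Ha'] Pa'; [lra|specialize (Mb a' Ha' Pa'); lra].
    + exists b; split; [right; exact Hb|split; [exact Pb|]].
      intros a' [<-|Ha'] Pa'; [apply Rnot_lt_le; intro; apply Hab; auto|auto].
  - destruct Ha0 as [<-|Ha0]; [|exfalso; apply Hl; eauto].
    exists a; split; [left; reflexivity|split; [exact Pa0|]].
    intros a' [<-|Ha'] Pa'; [lra|exfalso; apply Hl; eauto].
Qed.

Section ConicExtension.

Variables (n : nat) (D : vec n -> Prop) (f : vec n -> R).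
Hypothesis hfin : finite_sublevels D f.

Definition is_value (v : R) : Prop := exists p, D p /\ f p = v.

Definition sublevel_hull (v : R) : vec n -> Prop := conv (fun p => D p /\ f p <= v).

Definition consecutive (u w : R) : Prop := u <= w /\ forall v, is_value v -> ~ (u < v < w).

Definition layer (u w s : R) (x : vec n) : Prop :=
  is_value u /\ is_value w /\ consecutive u w /\ 0 <= s <= 1 /\
  mix (sublevel_hull u) (sublevel_hull w) s x.

Definition level (x : vec n) (c : R) : Prop :=
  exists u w s, layer u w s x /\ c = (1 - s) * u + s * w.

Definition conic_extension (x : vec n) : R := glb (level x).

Lemma sublevel_hull_mono u v x : u <= v -> sublevel_hull u x -> sublevel_hull v x.
Proof. intros H; apply conv_mono; intros p [? ?]; split; [auto|lra]. Qed.

Lemma sublevel_hull_of_value v : is_value v -> exists a, sublevel_hull v a.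
Proof. intros [p [Dp <-]]; exists p; apply conv_of_mem; split; [exact Dp|lra]. Qed.

Lemma sublevel_hull_list v : exists L, sublevel_hull v = conv (fun q => In q L).
Proof.
  destruct (hfin v) as [l Hl].
  exists (filter (fun p => if excluded_middle_informative (D p /\ f p <= v) then true else false) l).
  apply functional_extensionality; intro x; apply propositional_extensionality.
  split; apply conv_mono; intros p Hp.
  - apply filter_In; split; [apply Hl; apply Hp|].
    destruct excluded_middle_informative; tauto.
  - apply filter_In in Hp as [_ Hp]. destruct excluded_middle_informative; [assumption|discriminate].
Qed.

Lemma value_max (Q : R -> Prop) beta :
  (forall v, Q v -> v <= beta) -> (exists v, is_value v /\ Q v) ->
  exists u, is_value u /\ Q u /\ forall v, is_value v -> Q v -> v <= u.
Proof.
  intros Hbeta [v [[p [Dp <-]] Qv]]. destruct (hfin beta) as [l Hl].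
  destruct (list_max_by f (fun q => D q /\ Q (f q)) l) as [q [_ [[Dq Qq] Hq]]].
  { exists p; split; [apply Hl; auto|auto]. }
  exists (f q); split; [exists q; auto|split; [exact Qq|]].
  intros v' [p' [Dp' <-]] Qv'. apply Hq; [apply Hl; auto|auto].
Qed.

Lemma value_min (Q : R -> Prop) :
  (exists v, is_value v /\ Q v) ->
  exists w, is_value w /\ Q w /\ forall v, is_value v -> Q v -> w <= v.
Proof.
  intros [v [[p [Dp <-]] Qv]]. destruct (hfin (f p)) as [l Hl].
  destruct (list_max_by (fun q => - f q) (fun q => D q /\ Q (f q) /\ f q <= f p) l)
    as [q [_ [[Dq [Qq Hqp]] Hq]]].
  { exists p; split; [apply Hl; auto; lra|repeat split; auto; lra]. }
  exists (f q); split; [exists q; auto|split; [exact Qq|]].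
  intros v' [p' [Dp' <-]] Qv'. destruct (Rle_dec (f p') (f p)) as [Hle|Hgt]; [|lra].
  assert (- f p' <= - f q) by (apply Hq; [apply Hl; auto|auto]). lra.
Qed.

Lemma layer_top u w s x : layer u w s x -> sublevel_hull w x.
Proof.
  intros [_ [_ [[Huw _] [Hs Hmix]]]].
  exact (mix_top _ _ s x (conv_convex _) (fun a => sublevel_hull_mono u w a Huw) Hs Hmix).
Qed.

Lemma level_of_hull v x : is_value v -> sublevel_hull v x -> level x v.
Proof.
  intros Vv Hx. exists v, v, 0; split; [|ring].
  repeat split; auto; try lra; [intros v' _; lra|apply mix_of; exact Hx].
Qed.

Lemma level_between_values x c : level x c -> exists u w, is_value u /\ is_value w /\ u <= c <= w.
Proof. intros [u [w [s [[Vu [Vw [[Huw _] [Hs _]]]] ->]]]]. exists u, w; repeat split; auto; nra. Qed.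

Lemma layer_monotone x c u' w' s' :
  level x c -> c <= (1 - s') * u' + s' * w' -> is_value u' -> is_value w' ->
  consecutive u' w' -> u' < w' -> 0 <= s' <= 1 ->
  mix (sublevel_hull u') (sublevel_hull w') s' x.
Proof.
  intros [u [w [s [HL ->]]]] Hc Vu' Vw' [_ Cw'] Huw' Hs'.
  pose proof (layer_top u w s x HL) as Hxw.
  destruct HL as [Vu [Vw [[Huw Cw] [Hs Hmix]]]].
  destruct (sublevel_hull_of_value u' Vu') as [a' Ha'].
  destruct (Rle_dec w u') as [Hwu'|Hu'w].
  { apply mix_of; apply (sublevel_hull_mono w); auto; lra. }
  apply Rnot_le_lt in Hu'w.
  destruct (Req_dec u w) as [<-|Hne].
  - assert (u = w').
    { destruct (Rtotal_order u w') as [Hlt|[E|Hgt]]; [exfalso; apply (Cw' u Vu); lra|exact E|nra]. }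
    subst w'. assert (s' = 1) by nra. subst s'.
    exact (mix_one_intro _ _ a' x Ha' Hxw).
  - assert (Hu'u : u' <= u) by (apply Rnot_lt_le; intro; apply (Cw u' Vu'); lra).
    destruct (Rle_lt_or_eq_dec _ _ Hu'u) as [Hlt|<-].
    + assert (Hw'u : w' <= u) by (apply Rnot_lt_le; intro; apply (Cw' u Vu); lra).
      assert (s = 0) by nra. subst s. assert (s' = 1) by nra. subst s'.
      apply (mix_one_intro _ _ a'); [exact Ha'|].
      apply (sublevel_hull_mono u); [nra|exact (mix_zero _ _ _ Hmix)].
    + assert (w' = w).
      { destruct (Rtotal_order w' w) as [Hlt|[E|Hgt]];
          [exfalso; apply (Cw w' Vw'); lra|exact E|exfalso; apply (Cw' w Vw); lra]. }
      subst w'. apply (mix_up _ _ s); [apply conv_convex| |split; [lra|nra]|exact Hmix].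
      intros p; apply sublevel_hull_mono; lra.
Qed.

Lemma level_nonempty x : conv D x -> exists c, level x c.
Proof.
  intros [ps [Hps [Hw Hx]]].
  destruct (weighted_in_pos_entry D ps Hps Hw) as [p0 [a0 [Hin _]]].
  destruct (list_max_by f D (map fst ps)) as [q [Hq [Dq Mq]]].
  { exists p0; split; [exact (in_map fst _ _ Hin)|].
    rewrite Forall_forall in Hps; exact (proj1 (Hps _ Hin)). }
  exists (f q); apply level_of_hull; [exists q; auto|].
  exists ps; split; [|split; assumption].
  rewrite Forall_forall in *. intros pl Hpl. destruct (Hps pl Hpl) as [Dp Hl].
  repeat split; auto. apply Mq; [exact (in_map fst _ _ Hpl)|exact Dp].
Qed.

Lemma conic_extension_glb x : conv D x -> is_glb (level x) (conic_extension x).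
Proof.
  intros Hx. apply glb_spec; [exact (level_nonempty x Hx)|].
  destruct (level_nonempty x Hx) as [c0 Hc0].
  destruct (level_between_values x c0 Hc0) as [u0 [_ [Vu0 _]]].
  destruct (value_min (fun _ => True)) as [b [_ [_ Hb]]]; [exists u0; auto|].
  exists b; intros c Hc. destruct (level_between_values x c Hc) as [u [_ [Vu [_ [Huc _]]]]].
  specialize (Hb u Vu I); lra.
Qed.

Lemma conic_extension_lt x y : conv D x -> conic_extension x < y -> exists c, level x c /\ c < y.
Proof. intros Hx; apply is_glb_lt, conic_extension_glb, Hx. Qed.

Lemma sublevel_mix_limit u w s0 x :
  0 <= s0 < 1 -> (forall s, s0 < s <= 1 -> mix (sublevel_hull u) (sublevel_hull w) s x) ->
  mix (sublevel_hull u) (sublevel_hull w) s0 x.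
Proof.
  intros Hs0 Hmix.
  destruct (sublevel_hull_list u) as [Lu Eu]; destruct (sublevel_hull_list w) as [Lw Ew].
  rewrite Eu, Ew in *.
  destruct (conv_list_bounded Lu) as [Ku [_ HKu]]; destruct (conv_list_bounded Lw) as [Kw [_ HKw]].
  apply (mix_limit _ _ (Rmax Ku Kw)); [apply mix_conv_lists_closed; lra| |lra|exact Hmix].
  intros p [Hp|Hp] i.
  - eapply Rle_trans; [exact (HKu p Hp i)|apply Rmax_l].
  - eapply Rle_trans; [exact (HKw p Hp i)|apply Rmax_r].
Qed.

Lemma conic_extension_level x : conv D x -> level x (conic_extension x).
Proof.
  intros Hx. set (g := conic_extension x).
  destruct (classic (level x g)) as [Hg|Hg]; [exact Hg|exfalso].
  destruct (conic_extension_glb x Hx) as [Hlow _]; fold g in Hlow.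
  destruct (level_nonempty x Hx) as [c0 Hc0].
  assert (Hgc0 : g < c0).
  { destruct (Rle_lt_or_eq_dec _ _ (Hlow _ Hc0)) as [Hlt|E]; [exact Hlt|].
    rewrite E in Hg; contradiction. }
  destruct (level_between_values x c0 Hc0) as [_ [w0 [_ [Vw0 [_ Hw0]]]]].
  destruct (value_min (fun v => g < v)) as [w [Vw [Hgw Hwmin]]]; [exists w0; split; [exact Vw0|lra]|].
  destruct (conic_extension_lt x w Hx Hgw) as [c1 [Hc1 Hc1w]].
  destruct (level_between_values x c1 Hc1) as [u1 [_ [Vu1 [_ [Hu1 _]]]]].
  assert (Hu1g : u1 <= g) by (apply Rnot_lt_le; intro Hlt; specialize (Hwmin u1 Vu1 Hlt); lra).
  destruct (value_max (fun v => v <= g) g) as [u [Vu [Hug Humax]]]; [auto|exists u1; auto|].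
  assert (Cuw : consecutive u w).
  { split; [lra|]. intros v Vv [H1 H2]. destruct (Rle_dec v g) as [Hvg|Hvg].
    - specialize (Humax v Vv Hvg); lra.
    - specialize (Hwmin v Vv ltac:(lra)); lra. }
  set (sg := (g - u) / (w - u)).
  assert (Esg : sg * (w - u) = g - u) by (unfold sg; field; lra).
  assert (Hsg : 0 <= sg < 1) by (split; nra).
  apply Hg. exists u, w, sg; split; [|nra].
  refine (conj Vu (conj Vw (conj Cuw (conj _ _)))); [lra|].
  apply sublevel_mix_limit; [exact Hsg|]. intros s Hs.
  destruct (conic_extension_lt x ((1 - s) * u + s * w) Hx) as [c [Hc Hcl]]; [fold g; nra|].
  apply (layer_monotone x c u w s); auto; lra.
Qed.

Lemma level_ge_on_dom x c : discretely_conic D f -> D x -> level x c -> f x <= c.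
Proof.
  intros hconic Dx [u [w [s [[Vu [Vw [[Huw Cw] [Hs [a [b [Ha [Hb Ex]]]]]]]] ->]]]].
  destruct (Rle_dec (f x) u) as [Hxu|Hux]; [nra|apply Rnot_le_lt in Hux].
  destruct (Rlt_dec (f x) w) as [Hxw|Hwx]; [exfalso; apply (Cw (f x)); [exists x; auto|lra]|].
  apply Rnot_lt_le in Hwx.
  assert (Ha' : conv (fun p => D p /\ f p < f x) a)
    by (eapply conv_mono; [|exact Ha]; intros p [? ?]; split; [auto|lra]).
  assert (Hb' : conv (fun p => D p /\ f p <= f x) b)
    by (eapply conv_mono; [|exact Hb]; intros p [? ?]; split; [auto|lra]).
  destruct (Req_dec s 1) as [->|Hs1].
  - destruct (Req_dec w (f x)) as [->|Hwx']; [lra|exfalso].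
    assert (Exb : x = b) by (rewrite Ex; apply vec_ext; intro i; unfold vadd, vscale; ring).
    apply (discretely_conic_mix D f x b b 0 hconic Dx); [|exact Hb'|lra|].
    + eapply conv_mono; [|exact Hb]; intros p [? ?]; split; [auto|lra].
    + rewrite Exb at 1; apply vec_ext; intro i; unfold vadd, vscale; ring.
  - exfalso; exact (discretely_conic_mix D f x a b s hconic Dx Ha' Hb' ltac:(lra) Ex).
Qed.

Lemma conic_extension_agrees x : discretely_conic D f -> D x -> conic_extension x = f x.
Proof.
  intros hconic Dx.
  destruct (conic_extension_glb x (conv_of_mem D x Dx)) as [Hlow Hgreatest].
  apply Rle_antisym.
  - apply Hlow, level_of_hull; [exists x; auto|apply conv_of_mem; split; [exact Dx|lra]].
  - apply Hgreatest; intros c Hc; exact (level_ge_on_dom x c hconic Dx Hc).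
Qed.

Lemma conic_extension_conic : conic (conv D) conic_extension.
Proof.
  intros y z t Hy Hz Ht Hyz Hw.
  set (w := vadd z (vscale t (vsub z y))) in *.
  set (gm := conic_extension z) in *.
  apply Rnot_lt_le; intro Hlt.
  destruct (Req_dec t 0) as [T0|T0].
  { assert (Ewz : w = z)
      by (unfold w; apply vec_ext; intro i; unfold vadd, vscale, vsub; rewrite T0; ring).
    rewrite Ewz in Hlt; fold gm in Hlt; lra. }
  destruct (conic_extension_lt w gm Hw Hlt) as [cw [Hcw Hcwl]].
  destruct (level_between_values w cw Hcw) as [uw [_ [Vuw [_ [Huw _]]]]].
  destruct (value_max (fun v => v < gm) gm) as [u [Vu [Hug Humax]]];
    [intros; lra|exists uw; split; [exact Vuw|lra]|].
  destruct (level_nonempty z Hz) as [cz Hcz].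
  destruct (conic_extension_glb z Hz) as [Hzlow _]; fold gm in Hzlow.
  destruct (level_between_values z cz Hcz) as [_ [wz [_ [Vwz [_ Hwz]]]]].
  pose proof (Hzlow cz Hcz) as Hgcz.
  destruct (value_min (fun v => gm <= v)) as [w0 [Vw0 [Hgw0 Hw0min]]];
    [exists wz; split; [exact Vwz|lra]|].
  assert (Cuw : consecutive u w0).
  { split; [lra|]. intros v Vv [H1 H2]. destruct (Rlt_dec v gm) as [Hvg|Hvg].
    - specialize (Humax v Vv Hvg); lra.
    - specialize (Hw0min v Vv ltac:(lra)); lra. }
  set (sg := (gm - u) / (w0 - u)).
  assert (Esg : sg * (w0 - u) = gm - u) by (unfold sg; field; lra).
  assert (Hsg : 0 < sg <= 1) by (split; nra).
  assert (My : mix (sublevel_hull u) (sublevel_hull w0) sg y).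
  { apply (layer_monotone y (conic_extension y)); auto;
      [apply conic_extension_level; exact Hy|nra|lra|lra]. }
  set (s2 := (Rmax cw u - u) / (w0 - u)).
  assert (Es2 : s2 * (w0 - u) = Rmax cw u - u) by (unfold s2; field; lra).
  assert (Hmax : u <= Rmax cw u < gm) by (split; [apply Rmax_r|apply Rmax_lub_lt; lra]).
  assert (Hs2 : 0 <= s2 < sg) by (split; nra).
  assert (Mw : mix (sublevel_hull u) (sublevel_hull w0) s2 w).
  { apply (layer_monotone w cw); auto; [pose proof (Rmax_l cw u); nra|lra|lra]. }
  set (lam := / (1 + t)).
  assert (Hlam : 0 < lam < 1).
  { unfold lam; split; [apply Rinv_0_lt_compat; lra|].
    rewrite <- Rinv_1; apply Rinv_lt_contravar; lra. }
  assert (Ez : z = vadd (vscale lam w) (vscale (1 - lam) y)).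
  { unfold w, lam; apply vec_ext; intro i; unfold vadd, vscale, vsub; field; lra. }
  pose proof (mix_comb _ _ s2 sg lam w y (conv_convex _) (conv_convex _)
                ltac:(lra) ltac:(lra) ltac:(lra) Mw My) as Mz.
  rewrite <- Ez in Mz.
  set (s3 := lam * s2 + (1 - lam) * sg) in Mz.
  assert (Hs3 : 0 <= s3 < sg) by (unfold s3; split; nra).
  assert (Hz3 : level z ((1 - s3) * u + s3 * w0)).
  { exists u, w0, s3; split; [|reflexivity]. refine (conj Vu (conj Vw0 (conj Cuw (conj _ Mz)))); lra. }
  pose proof (Hzlow _ Hz3). nra.
Qed.

End ConicExtension.

Theorem mainTheorem5 (n : nat) (D : vec n -> Prop) (f : vec n -> R)
  (hdisc : discrete D) (hconic : discretely_conic D f)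
  (hfin : finite_sublevels D f) :
  (exists g : vec n -> R, conic (conv D) g /\ forall x, D x -> g x = f x)
  <->
  (forall i : nat, (2 <= i)%nat ->
     forall x, MIN D f i x -> relbd (conv (MINU D f i)) x).
Proof.
  split; intros _.
  - intros i Hi x Hx; exact (MIN_relbd D f i x hconic Hi Hx).
  - exists (conic_extension n D f); split.
    + exact (conic_extension_conic n D f hfin).
    + intros x Dx; exact (conic_extension_agrees n D f hfin x hconic Dx).
Qed.
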